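(* Let $X$ be a real Hilbert space, let $U,V$ be closed affine subspaces of $X$, let $T:=T_{U,V}$, $v:=P_{\overline{\operatorname{ran}}(\mathrm{Id}-T)}0$, and assume $v\in\operatorname{ran}(\mathrm{Id}-T)$. Then: (i) $T$ is affine and $T=\mathrm{Id}-P_U-P_V+2P_VP_U$; (ii) $v\in(\operatorname{par}U)^\perp\cap(\operatorname{par}V)^\perp$; (iii) for all $x\in X$, $\alpha\in\mathbb R$: $P_Ux=P_U(x+\alpha v)$; (iv) for all $x\in X$, $\alpha\in\mathbb R$: $P_Vx=P_V(x+\alpha v)$; (v) $T_{-v}=v+T=T_{(N_U,N_V(\cdot-v))}=T_{U,v+V}$; (vi) $Z_v=U\cap(v+V)$; (vii) $K_v=(\operatorname{par}U)^\perp\cap(\operatorname{par}V)^\perp$; (viii) $\operatorname{Fix}(T_{-v})=\operatorname{Fix}(v+T)=Z_v+K_v=(U\cap(v+V))+((\operatorname{par}U)^\perp\cap(\operatorname{par}V)^\perp)$.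
   Context: For nonempty closed convex $U,V$, $T_{U,V}:=\mathrm{Id}-P_U+P_V(2P_U-\mathrm{Id})$ is the Douglas–Rachford operator $T_{(N_U,N_V)}$, where for maximally monotone $A,B$, $T_{(A,B)}:=\mathrm{Id}-J_A+J_B(2J_A-\mathrm{Id})$ with $J_A=(\mathrm{Id}+A)^{-1}$. Here $v=P_{\overline{U-V}}0$. $\operatorname{par}U:=U-U$. $T_{-v}x:=T(x+v)$, $(v+T)x:=v+Tx$. For $C^\vee:=(-\mathrm{Id})\circ C\circ(-\mathrm{Id})$ and $C^{-\vee}:=(C^{-1})^\vee$, with $A=N_U$, $B=N_V$: $Z_v:=((-v+A)+B(\cdot-v))^{-1}(0)$ (normal solutions) and $K_v:=((-v+A)^{-1}+(B(\cdot-v))^{-\vee})^{-1}(0)$ (dual normal solutions). *)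

From Stdlib Require Import Reals ClassicalEpsilon.
Open Scope R_scope.
Set Implicit Arguments.

Record Hilbert := {
  hcar :> Type;
  hzero : hcar;
  hadd : hcar -> hcar -> hcar;
  hopp : hcar -> hcar;
  hscal : R -> hcar -> hcar;
  hinner : hcar -> hcar -> R;
  hadd_assoc : forall x y z, hadd x (hadd y z) = hadd (hadd x y) z;
  hadd_comm : forall x y, hadd x y = hadd y x;
  hadd_0 : forall x, hadd hzero x = x;
  hadd_opp : forall x, hadd x (hopp x) = hzero;
  hscal_assoc : forall a b x, hscal a (hscal b x) = hscal (a * b) x;
  hscal_1 : forall x, hscal 1 x = x;
  hscal_distr_v : forall a x y, hscal a (hadd x y) = hadd (hscal a x) (hscal a y);
  hscal_distr_s : forall a b x, hscal (a + b) x = hadd (hscal a x) (hscal b x);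
  hinner_sym : forall x y, hinner x y = hinner y x;
  hinner_add_l : forall x y z, hinner (hadd x y) z = hinner x z + hinner y z;
  hinner_scal_l : forall a x y, hinner (hscal a x) y = a * hinner x y;
  hinner_pos : forall x, 0 <= hinner x x;
  hinner_def : forall x, hinner x x = 0 -> x = hzero;
  hcomplete : forall s : nat -> hcar,
    (forall eps, 0 < eps -> exists N, forall m n, (N <= m)%nat -> (N <= n)%nat ->
       sqrt (hinner (hadd (s m) (hopp (s n))) (hadd (s m) (hopp (s n)))) < eps) ->
    exists l, forall eps, 0 < eps -> exists N, forall n, (N <= n)%nat ->
       sqrt (hinner (hadd (s n) (hopp l)) (hadd (s n) (hopp l))) < eps
}.

Arguments hzero {h}.
Arguments hadd {h}.
Arguments hopp {h}.
Arguments hscal {h}.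
Arguments hinner {h}.

Declare Scope hilbert_scope.
Delimit Scope hilbert_scope with H.
Notation "0" := hzero : hilbert_scope.
Notation "x + y" := (hadd x y) : hilbert_scope.
Notation "- x" := (hopp x) : hilbert_scope.
Notation "x - y" := (hadd x (hopp y)) : hilbert_scope.
Notation "a *: x" := (hscal a x) (at level 40, left associativity) : hilbert_scope.
Notation "<< x , y >>" := (hinner x y) (at level 0) : hilbert_scope.

Section Defs.
Context {X : Hilbert}.
Local Open Scope hilbert_scope.

Definition set : Type := X -> Prop.
Definition set_eq (A B : set) : Prop := forall x, A x <-> B x.
Definition fun_eq (f g : X -> X) : Prop := forall x, f x = g x.

Definition hnorm (x : X) : R := sqrt << x , x >>.

Definition closure (C : set) : set :=
  fun x => forall eps, 0%R < eps -> exists c, C c /\ hnorm (x - c) < eps.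
Definition is_closed (C : set) : Prop := forall x, closure C x -> C x.

Definition is_affine_subspace (U : set) : Prop :=
  (exists u, U u) /\
  forall x y (l : R), U x -> U y -> U (l *: x + (1 - l)%R *: y).
Definition closed_affine_subspace (U : set) : Prop :=
  is_affine_subspace U /\ is_closed U.

Definition inter (A B : set) : set := fun x => A x /\ B x.
Definition msum (A B : set) : set := fun x => exists a b, A a /\ B b /\ x = a + b.
Definition translate (w : X) (A : set) : set := fun x => exists a, A a /\ x = w + a.
Definition par (U : set) : set := fun x => exists a b, U a /\ U b /\ x = a - b.
Definition orth (S : set) : set := fun u => forall s, S s -> << u , s >> = 0%R.
Definition ran (f : X -> X) : set := fun y => exists x, f x = y.
Definition Fix (f : X -> X) : set := fun x => f x = x.

Definition affine_map (f : X -> X) : Prop :=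
  forall x y (l : R), f (l *: x + (1 - l)%R *: y) = l *: f x + (1 - l)%R *: f y.

(* metric projection onto C: a nearest point of C to x (unique when C is
   nonempty closed convex), chosen by Hilbert's epsilon *)
Definition proj (C : set) (x : X) : X :=
  epsilon (inhabits 0)
    (fun p => C p /\ forall c, C c -> hnorm (x - p) <= hnorm (x - c)).

Definition DR (U V : set) (x : X) : X :=
  x - proj U x + proj V (2%R *: proj U x - x).

(* set-valued operators: [A x u] means u \in A x *)
Definition op := X -> X -> Prop.
Definition normal_cone (C : set) : op :=
  fun x u => C x /\ forall c, C c -> << u , c - x >> <= 0%R.
Definition op_add (A B : op) : op :=
  fun x u => exists a b, A x a /\ B x b /\ u = a + b.
Definition op_inv (A : op) : op := fun x u => A u x.
Definition op_vee (C : op) : op := fun x u => C (- x) (- u).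
Definition op_translate (w : X) (A : op) : op :=
  fun x u => exists a, A x a /\ u = w + a.
Definition op_shift_arg (B : op) (v : X) : op := fun x u => B (x - v) u.
Definition zeros (C : op) : set := fun x => C x 0.

(* resolvent J_A = (Id + A)^{-1}: the y with x - y \in A y (unique for A
   maximally monotone) *)
Definition resolvent (A : op) (x : X) : X :=
  epsilon (inhabits x) (fun y => A y (x - y)).

Definition DR_op (A B : op) (x : X) : X :=
  x - resolvent A x + resolvent B (2%R *: resolvent A x - x).

Definition Zv (U V : set) (v : X) : set :=
  zeros (op_add (op_translate (- v) (normal_cone U))
                (op_shift_arg (normal_cone V) v)).
Definition Kv (U V : set) (v : X) : set :=
  zeros (op_add (op_inv (op_translate (- v) (normal_cone U)))
                (op_vee (op_inv (op_shift_arg (normal_cone V) v)))).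

End Defs.

(* The projection onto a closed affine subspace W exists (completeness and the
   parallelogram law), is characterised by [x - P_W x] being orthogonal to
   [par W], and is affine with linear part the orthogonal projection onto
   [par W]. Hence T and Id - T are affine, and v, the element of least norm in
   the range of Id - T, is orthogonal to every increment of Id - T, namely to
   [P_{par U} d + P_{par V} d - 2 P_{par V} P_{par U} d]. Testing with [d] in
   [par U] and in its orthogonal complement shows that v is orthogonal to
   [par U] and to [par V]. Translating by such a v commutes with P_U and P_V,
   and (v)-(viii) follow by computing resolvents of (shifted) normal cones of
   affine subspaces, which are projections. *)

From Stdlib Require Import Reals ClassicalEpsilon Psatz.
Local Open Scope hilbert_scope.
Open Scope R_scope.
Arguments hinner {h} _%_H _%_H.
Arguments hscal {h} _%_R _%_H.
Arguments proj {X} _ _%_H.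
Arguments hnorm {X} _%_H.
(* redeclared so that its arguments are parsed in [hilbert_scope] *)
Notation "<< x , y >>" := (hinner x%H y%H) (at level 0) : hilbert_scope.

Section HilbertAlgebra.
Context {X : Hilbert}.
Implicit Types x y z : X.

Lemma hadd_0r x : (x + 0 = x)%H.
Proof. rewrite hadd_comm; apply hadd_0. Qed.

Lemma hadd_cancel_l x y z : (x + y = x + z)%H -> y = z.
Proof.
  intro E.
  assert (Hneg : forall w, w = (- x + x + w)%H).
  { intro w. rewrite (hadd_comm _ (- x)%H), hadd_opp, hadd_0. reflexivity. }
  rewrite (Hneg y), (Hneg z), <- !hadd_assoc, E. reflexivity.
Qed.

Lemma hscal_0 x : (0 *: x = 0)%H.
Proof.
  apply (hadd_cancel_l (0 *: x)).
  rewrite <- hscal_distr_s, Rplus_0_r, hadd_0r. reflexivity.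
Qed.

Lemma hopp_scal x : (- x = (-1) *: x)%H.
Proof.
  apply (hadd_cancel_l x). rewrite hadd_opp.
  rewrite <- (hscal_1 _ x) at 1.
  rewrite <- hscal_distr_s, Rplus_opp_r, hscal_0. reflexivity.
Qed.

Lemma hinner_add_r x y z : << x , y + z >> = << x , y >> + << x , z >>.
Proof. rewrite !(hinner_sym _ x), hinner_add_l. reflexivity. Qed.

Lemma hinner_scal_r a x y : << x , a *: y >> = a * << x , y >>.
Proof. rewrite !(hinner_sym _ x), hinner_scal_l. reflexivity. Qed.

Lemma hinner_opp_l x y : << - x , y >> = - << x , y >>.
Proof. rewrite hopp_scal, hinner_scal_l. ring. Qed.

Lemma hinner_opp_r x y : << x , - y >> = - << x , y >>.
Proof. rewrite hopp_scal, hinner_scal_r. ring. Qed.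

Lemma hinner_0l y : << 0 , y >> = 0.
Proof. rewrite <- (hscal_0 y), hinner_scal_l. ring. Qed.

Lemma hinner_0r y : << y , 0 >> = 0.
Proof. rewrite hinner_sym; apply hinner_0l. Qed.

Lemma hsub_eq0 x y : << x - y , x - y >> = 0 -> x = y.
Proof.
  intro H. apply hinner_def in H.
  rewrite <- (hadd_0r x), <- (hadd_opp _ y), (hadd_comm _ y), hadd_assoc, H, hadd_0.
  reflexivity.
Qed.

End HilbertAlgebra.

Create HintDb hinner_expand.
Hint Rewrite @hinner_add_l @hinner_add_r @hinner_scal_l @hinner_scal_r
  @hinner_opp_l @hinner_opp_r @hinner_0l @hinner_0r : hinner_expand.

Ltac hexpand := autorewrite with hinner_expand.
Ltac hexpand_in H := autorewrite with hinner_expand in H.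

(* [x = y] follows from [<< x - y , x - y >> = 0]; after bilinear expansion
   this is a polynomial identity between inner products of the atoms. *)
Ltac hvec := apply hsub_eq0; hexpand; first [ring | field].

Lemma quadratic_nonneg_eq0 (k M : R) :
  0 <= M -> (forall t, 0 <= -2 * t * k + t * t * M) -> k = 0.
Proof.
  intros HM H.
  set (t := k / (M + 1)).
  assert (Ht : t * (M + 1) = k) by (unfold t; field; lra).
  specialize (H t). rewrite <- Ht in H.
  assert (t = 0) by nra.
  rewrite <- Ht, H0. ring.
Qed.

Lemma eventually_inv_INR_S_lt (e : R) :
  0 < e -> exists K, forall n, (K <= n)%nat -> / INR (S n) < e.
Proof.
  intro He. destruct (archimed_cor1 e He) as [K [HK HK0]]. exists K. intros n Hn.
  apply Rle_lt_trans with (/ INR K); auto.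
  apply Rinv_le_contravar. apply lt_0_INR; lia. apply le_INR; lia.
Qed.

Section NearestPoint.
Context {X : Hilbert}.
Implicit Types x y z : X.

Lemma sqnorm_add_young (t : R) (a b : X) : 0 < t ->
  t * << a + b , a + b >> <= t * (1 + t) * << a , a >> + (1 + t) * << b , b >>.
Proof.
  intro Ht. pose proof (hinner_pos _ (t *: a - b)%H) as H0.
  hexpand. hexpand_in H0. rewrite (hinner_sym _ b a) in *. nra.
Qed.

Lemma le_of_sqnorm_approx (A B : R) : 0 <= B ->
  (forall d, 0 < d -> exists a b : X,
     A <= << a + b , a + b >> /\ << a , a >> <= B + d /\ << b , b >> <= d) ->
  A <= B.
Proof.
  intros HB H. apply Rle_plus_epsilon. intros e He.
  (* Young's inequality with weight [t]; the choice of [t] and of the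
     approximation threshold [t e / 8] makes every error term at most [e / 2]. *)
  set (t := e / (2 * (B + 1) + e)).
  assert (Ht0 : 0 < t) by (unfold t; apply Rdiv_lt_0_compat; lra).
  assert (Ht1 : t * (2 * (B + 1) + e) = e) by (unfold t; field; lra).
  assert (Ht2 : t <= 1) by nra.
  assert (Ht3 : t * (B + 1) <= e / 2) by nra.
  destruct (H (t * e / 8)) as (a & b & H1 & H2 & H3). { apply Rdiv_lt_0_compat; nra. }
  pose proof (sqnorm_add_young t a b Ht0) as P.
  assert (t * A <= t * (1 + t) * (B + t * e / 8) + (1 + t) * (t * e / 8)).
  { apply Rle_trans with (t * << a + b , a + b >>). apply Rmult_le_compat_l; lra.
    apply Rle_trans with (1 := P).
    apply Rplus_le_compat; apply Rmult_le_compat_l; nra. }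
  assert (t * (t * B) <= t * (e / 2)) by (apply Rmult_le_compat_l; nra).
  assert ((1 + t) * (1 + t) * (t * e) <= 4 * (t * e)) by (apply Rmult_le_compat_r; nra).
  apply Rmult_le_reg_l with t; nra.
Qed.

Lemma closure_sqdist_ge (C : @set X) x m : 0 <= m ->
  (forall c, C c -> m <= << x - c , x - c >>) ->
  forall c, closure C c -> m <= << x - c , x - c >>.
Proof.
  intros Hm HC c Hc. apply le_of_sqnorm_approx. apply hinner_pos.
  intros d Hd. destruct (Hc (sqrt d)) as [c' [Hc' Hn]]. { apply sqrt_lt_R0; lra. }
  exists (x - c)%H, (c - c')%H.
  replace (x - c + (c - c'))%H with (x - c')%H by hvec.
  split; [auto | split; [lra |]].
  left. apply sqrt_lt_0_alt. exact Hn.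
Qed.

Lemma closure_incl (C : @set X) c : C c -> closure C c.
Proof.
  intros Hc eps He. exists c. split; auto. unfold hnorm.
  rewrite hadd_opp, hinner_0l, sqrt_0. auto.
Qed.

Definition midpoint_closed (C : @set X) : Prop :=
  forall a b, C a -> C b -> C (/2 *: a + (1 - /2) *: b)%H.

Lemma sqnorm_sub_sym (a b : X) : << a - b , a - b >> = << b - a , b - a >>.
Proof. hexpand. ring. Qed.

Lemma parallelogram (a b x : X) :
  << a - b , a - b >>
  + 4 * << x - (/2 *: a + (1 - /2) *: b) , x - (/2 *: a + (1 - /2) *: b) >>
  = 2 * << x - a , x - a >> + 2 * << x - b , x - b >>.
Proof. hexpand. field. Qed.

Lemma sqdist_inf_exists (C : @set X) x : (exists c, C c) ->
  exists m, 0 <= m /\ (forall c, C c -> m <= << x - c , x - c >>) /\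
    forall e, 0 < e -> exists c, C c /\ << x - c , x - c >> < m + e.
Proof.
  intros [c0 Hc0].
  set (E := fun r => exists c, C c /\ r = - << x - c , x - c >>).
  assert (Hb : bound E).
  { exists 0. intros r [c [_ ->]]. pose proof (hinner_pos _ (x - c)%H). lra. }
  destruct (completeness E Hb (ex_intro _ _ (ex_intro _ c0 (conj Hc0 eq_refl))))
    as [s [Hub Hlub]].
  exists (- s). split; [|split].
  - assert (s <= 0); [|lra].
    apply Hlub. intros r [c [_ ->]]. pose proof (hinner_pos _ (x - c)%H). lra.
  - intros c Hc. assert (- << x - c , x - c >> <= s) by (apply Hub; exists c; auto). lra.
  - intros e He. apply NNPP; intro Hn.
    assert (is_upper_bound E (s - e)).
    { intros r [c [Hc ->]]. apply Rnot_lt_le; intro Hlt. apply Hn. exists c. split; auto. lra. }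
    apply Hlub in H; lra.
Qed.

Lemma nearest_point_exists (C : @set X) x : (exists c, C c) -> midpoint_closed C ->
  exists p, closure C p /\ forall c, closure C c -> << x - p , x - p >> <= << x - c , x - c >>.
Proof.
  intros Hne Hmid.
  destruct (sqdist_inf_exists C x Hne) as (m & Hm0 & Hlb & Happ).
  assert (Hs : forall n : nat, exists c, C c /\ << x - c , x - c >> < m + / INR (S n)).
  { intro n. apply Happ. apply Rinv_0_lt_compat, lt_0_INR; lia. }
  destruct (choice _ Hs) as [s Hsn].
  (* a minimizing sequence is Cauchy by the parallelogram law, since midpoints stay in [C] *)
  assert (Hcau : forall eps, 0 < eps -> exists K, forall i j, (K <= i)%nat -> (K <= j)%nat ->
            sqrt << s i - s j , s i - s j >> < eps).
  { intros eps He. destruct (eventually_inv_INR_S_lt (eps * eps / 4)) as [K HK]. nra.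
    exists K. intros i j Hi Hj.
    pose proof (parallelogram (s i) (s j) x) as P.
    destruct (Hsn i) as [Ci Ni], (Hsn j) as [Cj Nj].
    pose proof (Hlb _ (Hmid _ _ Ci Cj)).
    pose proof (HK i Hi). pose proof (HK j Hj).
    rewrite <- (sqrt_square eps) by lra.
    apply sqrt_lt_1_alt. split. apply hinner_pos. lra. }
  destruct (hcomplete X s Hcau) as [p Hp].
  assert (Hpcl : closure C p).
  { intros eps Heps. destruct (Hp eps Heps) as [K HK]. exists (s K). split. apply Hsn.
    unfold hnorm. rewrite sqnorm_sub_sym. apply HK; lia. }
  exists p. split; auto.
  intros c Hc. apply Rle_trans with m; [| exact (closure_sqdist_ge C x m Hm0 Hlb c Hc)].
  apply le_of_sqnorm_approx; auto. intros d Hd.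
  destruct (eventually_inv_INR_S_lt d Hd) as [K1 HK1].
  destruct (Hp (sqrt d)) as [K2 HK2]. { apply sqrt_lt_R0; lra. }
  set (n := Nat.max K1 K2).
  exists (x - s n)%H, (s n - p)%H.
  replace (x - s n + (s n - p))%H with (x - p)%H by hvec.
  split; [lra | split].
  - destruct (Hsn n) as [_ Hn]. assert (/ INR (S n) < d) by (apply HK1; lia). lra.
  - left. apply sqrt_lt_0_alt. apply HK2. lia.
Qed.

Lemma proj_nearest (C : @set X) x :
  (exists p, C p /\ forall c, C c -> << x - p , x - p >> <= << x - c , x - c >>) ->
  C (proj C x) /\ forall c, C c -> << x - proj C x , x - proj C x >> <= << x - c , x - c >>.
Proof.
  intros [p [Hp Hmin]].
  assert (Hex : exists p, C p /\ forall c, C c -> hnorm (x - p) <= hnorm (x - c)).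
  { exists p. split; auto. intros c Hc. apply sqrt_le_1_alt. auto. }
  destruct (epsilon_spec (inhabits 0%H) _ Hex) as [H1 H2].
  split; [exact H1|]. intros c Hc.
  apply sqrt_le_0; try apply hinner_pos. exact (H2 c Hc).
Qed.

End NearestPoint.

Section AffineProjection.
Context {X : Hilbert}.
Implicit Types x y z : X.
Implicit Types W S : @set X.

Lemma orth_add S u w : orth S u -> orth S w -> orth S (u + w)%H.
Proof. intros Hu Hw s Hs. hexpand. rewrite Hu, Hw; auto. ring. Qed.

Lemma orth_scal S a u : orth S u -> orth S (a *: u)%H.
Proof. intros Hu s Hs. hexpand. rewrite Hu; auto. ring. Qed.

Lemma orth_opp S u : orth S u -> orth S (- u)%H.
Proof. intros Hu s Hs. hexpand. rewrite Hu; auto. ring. Qed.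

Lemma orth_sub S u w : orth S u -> orth S w -> orth S (u - w)%H.
Proof. intros. apply orth_add; auto using orth_opp. Qed.

Lemma orth_0 S : orth S 0%H.
Proof. intros s _. apply hinner_0l. Qed.

Lemma par_sub W a b : W a -> W b -> par W (a - b)%H.
Proof. intros Ha Hb. exists a, b. auto. Qed.

Lemma affine_midpoint_closed W : is_affine_subspace W -> midpoint_closed W.
Proof. intros [_ Haff] a b Ha Hb. apply Haff; auto. Qed.

Lemma sqnorm_sub_scal (w z : X) t :
  << w - t *: z , w - t *: z >> = << w , w >> - 2 * t * << w , z >> + t * t * << z , z >>.
Proof. hexpand. rewrite (hinner_sym _ z w). ring. Qed.

Lemma nearest_orth_par W x p : is_affine_subspace W -> W p ->
  (forall c, W c -> << x - p , x - p >> <= << x - c , x - c >>) ->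
  orth (par W) (x - p)%H.
Proof.
  intros [_ Haff] Hp Hmin.
  (* first variation along the segment from [p] to [c] *)
  assert (K : forall c, W c -> << x - p , c - p >> = 0).
  { intros c Hc. apply (quadratic_nonneg_eq0 _ << c - p , c - p >>).
    { apply hinner_pos. }
    intro t. specialize (Hmin _ (Haff c p t Hc Hp)).
    replace (x - (t *: c + (1 - t) *: p))%H with ((x - p) - t *: (c - p))%H in Hmin by hvec.
    rewrite sqnorm_sub_scal in Hmin. lra. }
  intros s [a [b [Ha [Hb ->]]]].
  pose proof (K a Ha) as Ka. pose proof (K b Hb) as Kb.
  hexpand_in Ka. hexpand_in Kb. hexpand. lra.
Qed.

Lemma proj_spec W x : closed_affine_subspace W ->
  W (proj W x) /\ orth (par W) (x - proj W x)%H.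
Proof.
  intros [Haff Hcl].
  destruct (nearest_point_exists W x (proj1 Haff) (affine_midpoint_closed W Haff))
    as [p [Hp Hmin]].
  destruct (proj_nearest W x) as [Hin Hnear].
  { exists p. split; auto using closure_incl. }
  split; auto. apply nearest_orth_par; auto.
Qed.

Lemma proj_in W x : closed_affine_subspace W -> W (proj W x).
Proof. intro HW. apply (proj_spec W x HW). Qed.

Lemma proj_orth W x : closed_affine_subspace W -> orth (par W) (x - proj W x)%H.
Proof. intro HW. apply (proj_spec W x HW). Qed.

Lemma proj_unique W x p : closed_affine_subspace W -> W p ->
  orth (par W) (x - p)%H -> proj W x = p.
Proof.
  intros HW Hp Ho. destruct (proj_spec W x HW) as [Hq Hoq].
  set (q := proj W x) in *.
  assert (H1 : << x - q , p - q >> = 0) by (apply Hoq, par_sub; auto).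
  assert (H2 : << x - p , q - p >> = 0) by (apply Ho, par_sub; auto).
  apply hsub_eq0. hexpand_in H1. hexpand_in H2. hexpand. lra.
Qed.

Lemma proj_id W u : closed_affine_subspace W -> W u -> proj W u = u.
Proof.
  intros HW Hu. apply proj_unique; auto.
  replace (u - u)%H with (@hzero X) by hvec. apply orth_0.
Qed.

Lemma par_0 W : closed_affine_subspace W -> par W 0%H.
Proof.
  intro HW. replace (@hzero X) with (proj W 0 - proj W 0)%H by hvec.
  apply par_sub; apply proj_in; auto.
Qed.

Lemma proj_affine W x y l : closed_affine_subspace W ->
  proj W (l *: x + (1 - l) *: y)%H = (l *: proj W x + (1 - l) *: proj W y)%H.
Proof.
  intro HW. apply proj_unique; auto.
  - apply (proj2 (proj1 HW)); apply proj_in; auto.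
  - replace (l *: x + (1 - l) *: y - (l *: proj W x + (1 - l) *: proj W y))%H
      with (l *: (x - proj W x) + (1 - l) *: (y - proj W y))%H by hvec.
    apply orth_add; apply orth_scal; apply proj_orth; auto.
Qed.

Lemma orth_decomp_unique W b1 c1 b2 c2 :
  par W b1 -> orth (par W) c1 -> par W b2 -> orth (par W) c2 ->
  (b1 + c1 = b2 + c2)%H -> b1 = b2.
Proof.
  intros Hb1 Hc1 Hb2 Hc2 E.
  assert (Ec : (b1 - b2 = c2 - c1)%H).
  { transitivity ((b1 + c1) - b2 - c1)%H. hvec. rewrite E. hvec. }
  apply hsub_eq0. rewrite Ec at 1. hexpand.
  rewrite (Hc1 b1), (Hc1 b2), (Hc2 b1), (Hc2 b2); auto. ring.
Qed.

(* The linear part of [proj W], i.e. the orthogonal projection onto [par W]. *)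
Definition proj_lin W e := (proj W e - proj W 0)%H.

Lemma proj_lin_par W e : closed_affine_subspace W -> par W (proj_lin W e).
Proof. intro HW. apply par_sub; apply proj_in; auto. Qed.

Lemma proj_lin_orth W e : closed_affine_subspace W -> orth (par W) (e - proj_lin W e)%H.
Proof.
  intro HW.
  replace (e - proj_lin W e)%H with ((e - proj W e) - (0 - proj W 0))%H by (unfold proj_lin; hvec).
  apply orth_sub; apply proj_orth; auto.
Qed.

Lemma proj_add W z e : closed_affine_subspace W ->
  proj W (z + e)%H = (proj W z + proj_lin W e)%H.
Proof.
  intro HW.
  assert (E : (proj W (z + e) - proj W z)%H = proj_lin W e).
  { apply (orth_decomp_unique W _ (e - (proj W (z + e) - proj W z))%H _ (e - proj_lin W e)%H).
    - apply par_sub; apply proj_in; auto.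
    - replace (e - (proj W (z + e) - proj W z))%H
        with (((z + e) - proj W (z + e)) - (z - proj W z))%H by hvec.
      apply orth_sub; apply proj_orth; auto.
    - apply proj_lin_par; auto.
    - apply proj_lin_orth; auto.
    - hvec. }
  rewrite <- E. hvec.
Qed.

Lemma proj_lin_id W e : closed_affine_subspace W -> par W e -> proj_lin W e = e.
Proof.
  intros HW He. apply (orth_decomp_unique W _ (e - proj_lin W e)%H _ 0%H);
    auto using proj_lin_par, proj_lin_orth, orth_0. hvec.
Qed.

Lemma proj_lin_eq0 W e : closed_affine_subspace W -> orth (par W) e -> proj_lin W e = 0%H.
Proof.
  intros HW He. apply (orth_decomp_unique W _ (e - proj_lin W e)%H _ e);
    auto using proj_lin_par, proj_lin_orth, par_0. hvec.
Qed.

Lemma proj_lin_sym W e f : closed_affine_subspace W ->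
  << proj_lin W e , f >> = << e , proj_lin W f >>.
Proof.
  intro HW.
  pose proof (proj_lin_orth W f HW _ (proj_lin_par W e HW)) as H1.
  pose proof (proj_lin_orth W e HW _ (proj_lin_par W f HW)) as H2.
  hexpand_in H1. hexpand_in H2.
  rewrite (hinner_sym _ (proj_lin W f) (proj_lin W e)) in H1.
  rewrite (hinner_sym _ (proj_lin W e) f). lra.
Qed.

Lemma proj_add_orth W z e : closed_affine_subspace W -> orth (par W) e ->
  proj W (z + e)%H = proj W z.
Proof. intros HW He. rewrite proj_add, proj_lin_eq0; auto. hvec. Qed.

Lemma par_orth_orth W b : closed_affine_subspace W ->
  (forall c, orth (par W) c -> << b , c >> = 0) -> par W b.
Proof.
  intros HW Hb. replace b with (proj_lin W b); [apply proj_lin_par; auto |].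
  pose proof (Hb _ (proj_lin_orth W b HW)) as H1.
  pose proof (proj_lin_orth W b HW _ (proj_lin_par W b HW)) as H2.
  apply hsub_eq0. hexpand_in H1. hexpand_in H2. hexpand.
  rewrite (hinner_sym _ (proj_lin W b) b). lra.
Qed.

End AffineProjection.

Section NormalCone.
Context {X : Hilbert}.
Implicit Types x y z : X.
Implicit Types W : @set X.

Lemma normal_cone_orth W y u : is_affine_subspace W -> normal_cone W y u -> orth (par W) u.
Proof.
  intros [_ Haff] [Hy Hn].
  (* [W] contains [c] and its reflection [2 y - c] through [y] *)
  assert (K : forall c, W c -> << u , c >> = << u , y >>).
  { intros c Hc. pose proof (Hn c Hc) as A1.
    pose proof (Hn _ (Haff y c 2 Hy Hc)) as A2. hexpand_in A1. hexpand_in A2. lra. }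
  intros s [a [b [Ha [Hb ->]]]]. hexpand. rewrite (K a), (K b); auto. ring.
Qed.

Lemma normal_cone_of_orth W p u : W p -> orth (par W) u -> normal_cone W p u.
Proof.
  intros Hp Hu. split; auto. intros c Hc. rewrite (Hu (c - p)%H). lra. apply par_sub; auto.
Qed.

Lemma resolvent_normal_cone W x : closed_affine_subspace W ->
  resolvent (normal_cone W) x = proj W x.
Proof.
  intro HW. unfold resolvent.
  assert (Hex : exists y, normal_cone W y (x - y)%H).
  { exists (proj W x). apply normal_cone_of_orth; [apply proj_in | apply proj_orth]; auto. }
  pose proof (epsilon_spec (inhabits x) _ Hex) as Hs.
  set (y := epsilon _ _) in *. symmetry. apply proj_unique; auto.
  apply Hs. apply (normal_cone_orth W y); auto. apply HW.
Qed.

Lemma resolvent_shift_arg W v z : closed_affine_subspace W ->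
  resolvent (op_shift_arg (normal_cone W) v) z = (v + proj W (z - v))%H.
Proof.
  intro HW. unfold resolvent, op_shift_arg.
  assert (Hex : exists y, normal_cone W (y - v)%H (z - y)%H).
  { exists (v + proj W (z - v))%H.
    replace (v + proj W (z - v) - v)%H with (proj W (z - v)) by hvec.
    replace (z - (v + proj W (z - v)))%H with ((z - v) - proj W (z - v))%H by hvec.
    apply normal_cone_of_orth; [apply proj_in | apply proj_orth]; auto. }
  pose proof (epsilon_spec (inhabits z) _ Hex) as Hs.
  set (y := epsilon _ _) in *.
  assert (Hp : proj W (z - v) = (y - v)%H).
  { apply proj_unique; auto. apply Hs.
    replace (z - v - (y - v))%H with (z - y)%H by hvec.
    apply (normal_cone_orth W (y - v)%H); auto. apply HW. }
  rewrite Hp. hvec.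
Qed.

Lemma translate_closed_affine W v : closed_affine_subspace W ->
  closed_affine_subspace (translate v W).
Proof.
  intros [[[w Hw] Haff] Hcl]. split; [split|].
  - exists (v + w)%H, w; auto.
  - intros x y l [a [Ha ->]] [b [Hb ->]]. exists (l *: a + (1 - l) *: b)%H.
    split. apply Haff; auto. hvec.
  - intros y Hy. exists (y - v)%H. split; [| hvec].
    apply Hcl. intros eps He. destruct (Hy eps He) as [c [[a [Ha ->]] Hn]].
    exists a. split; auto.
    replace (y - v - a)%H with (y - (v + a))%H by hvec. auto.
Qed.

Lemma proj_translate W v z : closed_affine_subspace W ->
  proj (translate v W) z = (v + proj W (z - v))%H.
Proof.
  intro HW. apply proj_unique; auto using translate_closed_affine.
  - exists (proj W (z - v)). split; [apply proj_in; auto | reflexivity].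
  - intros s [a' [b' [[a [Ha ->]] [[b [Hb ->]] ->]]]].
    replace (v + a - (v + b))%H with (a - b)%H by hvec.
    replace (z - (v + proj W (z - v)))%H with ((z - v) - proj W (z - v))%H by hvec.
    apply proj_orth, par_sub; auto.
Qed.

End NormalCone.

Section MinimalNorm.
Context {X : Hilbert}.
Implicit Types f : X -> X.

Lemma affine_map_id_sub f : affine_map f -> affine_map (fun x => x - f x)%H.
Proof. intros Hf x y l. rewrite Hf. hvec. Qed.

Lemma affine_ran_midpoint_closed f : affine_map f -> midpoint_closed (ran f).
Proof.
  intros Hf a b [x <-] [y <-]. exists (/2 *: x + (1 - /2) *: y)%H. apply Hf.
Qed.

Lemma proj_closure_ran_min f x0 : affine_map f ->
  f x0 = proj (closure (ran f)) 0 -> forall y, << f x0 , f x0 >> <= << f y , f y >>.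
Proof.
  intros Hf Hx0 y.
  destruct (proj_nearest (closure (ran f)) 0%H) as [_ Hmin].
  { apply nearest_point_exists; [exists (f 0%H), 0%H; reflexivity |].
    apply affine_ran_midpoint_closed; auto. }
  pose proof (Hmin (f y) (closure_incl _ _ (ex_intro _ y eq_refl))) as H.
  rewrite <- Hx0 in H. revert H. hexpand. lra.
Qed.

Lemma min_norm_affine_orth f x0 : affine_map f ->
  (forall y, << f x0 , f x0 >> <= << f y , f y >>) ->
  forall d, << f x0 , f (x0 + d) - f x0 >> = 0.
Proof.
  intros Hf Hmin d. set (w := (f (x0 + d) - f x0)%H).
  apply (quadratic_nonneg_eq0 _ << w , w >>). apply hinner_pos.
  intro t. pose proof (Hmin (x0 + (-t) *: d)%H) as H.
  replace (x0 + (-t) *: d)%H with ((-t) *: (x0 + d) + (1 - (-t)) *: x0)%H in H by hvec.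
  rewrite Hf in H.
  replace ((-t) *: f (x0 + d) + (1 - (-t)) *: f x0)%H with (f x0 - t *: w)%H in H
    by (unfold w; hvec).
  rewrite sqnorm_sub_scal in H. lra.
Qed.

End MinimalNorm.

Section DouglasRachford.
Context {X : Hilbert} (U V : @set X).
Hypotheses (HU : closed_affine_subspace U) (HV : closed_affine_subspace V).

Lemma DR_formula x :
  DR U V x = (x - proj U x - proj V x + 2 *: proj V (proj U x))%H.
Proof.
  unfold DR.
  replace (2 *: proj U x - x)%H with (2 *: proj U x + (1 - 2) *: x)%H by hvec.
  rewrite proj_affine; auto. hvec.
Qed.

Lemma DR_affine : affine_map (DR U V).
Proof. intros x y l. rewrite !DR_formula, !proj_affine; auto. hvec. Qed.

Definition DR_displacement x := (x - DR U V x)%H.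

Lemma DR_displacement_formula x :
  DR_displacement x = (proj U x + proj V x - 2 *: proj V (proj U x))%H.
Proof. unfold DR_displacement. rewrite DR_formula. hvec. Qed.

Lemma DR_displacement_add x d :
  DR_displacement (x + d)%H = (DR_displacement x + (proj_lin U d + proj_lin V d
                                 - 2 *: proj_lin V (proj_lin U d)))%H.
Proof.
  rewrite !DR_displacement_formula, (proj_add U), (proj_add V x), (proj_add V); auto. hvec.
Qed.

Lemma DR_displacement_orth_par x b : par U b -> par V b -> << DR_displacement x , b >> = 0.
Proof.
  intros HbU HbV.
  assert (EV : proj V x = (proj V (proj U x) + proj_lin V (x - proj U x))%H).
  { rewrite <- proj_add; auto. f_equal. hvec. }
  pose proof (proj_orth V (proj U x) HV b HbV) as H1.
  assert (H2 : << proj_lin V (x - proj U x) , b >> = 0).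
  { rewrite proj_lin_sym, proj_lin_id; auto. apply proj_orth; auto. }
  rewrite DR_displacement_formula, EV. hexpand_in H1. hexpand. lra.
Qed.

Lemma min_DR_displacement_orth x0 :
  DR_displacement x0 = proj (closure (ran DR_displacement)) 0 ->
  orth (par U) (DR_displacement x0) /\ orth (par V) (DR_displacement x0).
Proof.
  intro Hx0. set (v := DR_displacement x0).
  assert (Hstat : forall d, << v , proj_lin U d + proj_lin V d
                                 - 2 *: proj_lin V (proj_lin U d) >> = 0).
  { intro d. rewrite <- (min_norm_affine_orth DR_displacement x0) with (d := d).
    - f_equal. rewrite DR_displacement_add. hvec.
    - apply affine_map_id_sub, DR_affine.
    - apply proj_closure_ran_min; auto. apply affine_map_id_sub, DR_affine. }
  (* Stationarity gives [v - b] orthogonal to [par U] and [b] in [par U] and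
     [par V]; since [v] is orthogonal to [par U] and [par V] jointly, [b = 0]. *)
  set (b := proj_lin V v).
  assert (HvbU : orth (par U) (v - b)%H).
  { intros a Ha. pose proof (Hstat a) as K. rewrite proj_lin_id in K; auto.
    unfold b. hexpand_in K. hexpand. rewrite proj_lin_sym; auto. lra. }
  assert (HbU : par U b).
  { apply par_orth_orth; auto. intros c Hc. pose proof (Hstat c) as K.
    rewrite (proj_lin_eq0 U c), (proj_lin_eq0 V 0%H) in K by auto using orth_0.
    unfold b. rewrite proj_lin_sym; auto. hexpand_in K. lra. }
  assert (HbV : par V b) by (apply proj_lin_par; auto).
  assert (Hb0 : b = 0%H).
  { apply hinner_def.
    pose proof (proj_lin_orth V v HV b HbV) as K. fold b in K.
    pose proof (DR_displacement_orth_par x0 b HbU HbV) as Kv. fold v in Kv.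
    hexpand_in K. lra. }
  split.
  - replace v with (v - b)%H by (rewrite Hb0; hvec). auto.
  - replace v with (v - proj_lin V v)%H by (fold b; rewrite Hb0; hvec). apply proj_lin_orth; auto.
Qed.

End DouglasRachford.

Section ShiftedProblem.
Context {X : Hilbert} (U V : @set X) (v : X).
Hypotheses (HU : closed_affine_subspace U) (HV : closed_affine_subspace V).

Lemma DR_op_shift_translate :
  fun_eq (DR_op (normal_cone U) (op_shift_arg (normal_cone V) v)) (DR U (translate v V)).
Proof.
  intro x. unfold DR_op, DR.
  rewrite resolvent_normal_cone, resolvent_shift_arg, proj_translate; auto.
Qed.

Hypotheses (HvU : orth (par U) v) (HvV : orth (par V) v).

Lemma DR_add_orth x : DR U V (x + v)%H = (v + DR U V x)%H.
Proof. rewrite !DR_formula, (proj_add_orth U), (proj_add_orth V); auto. hvec. Qed.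

Lemma DR_op_shift_eq :
  fun_eq (fun x => v + DR U V x)%H (DR_op (normal_cone U) (op_shift_arg (normal_cone V) v)).
Proof.
  intro x. unfold DR_op, DR.
  rewrite resolvent_normal_cone, resolvent_shift_arg; auto.
  rewrite (proj_add_orth V _ (- v)%H); auto using orth_opp. hvec.
Qed.

Lemma Zv_eq : set_eq (Zv U V v) (inter U (translate v V)).
Proof.
  intro x. unfold Zv, zeros, op_add, op_translate, op_shift_arg. split.
  - intros (a & b & (a' & [Hx _] & _) & [Hxv _] & _). split; auto.
    exists (x - v)%H. split; auto. hvec.
  - intros [Hx [w [Hw ->]]]. exists (- v + v)%H, 0%H. split; [| split].
    + exists v. split; auto. apply normal_cone_of_orth; auto.
    + replace (v + w - v)%H with w by hvec. apply normal_cone_of_orth; auto using orth_0.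
    + hvec.
Qed.

Lemma Kv_eq : (exists z, U z /\ translate v V z) ->
  set_eq (Kv U V v) (inter (orth (par U)) (orth (par V))).
Proof.
  intros [z [Hz [w [Hw Ez]]]] x.
  unfold Kv, zeros, op_add, op_inv, op_translate, op_vee, op_shift_arg. split.
  - intros (a & b & (a' & Ha' & Ex) & Hb & _). split.
    + replace x with (- v + a')%H by auto.
      apply orth_add; auto using orth_opp. apply (normal_cone_orth U a); auto. apply HU.
    + replace x with (- - x)%H by hvec. apply orth_opp.
      apply (normal_cone_orth V (- b - v)%H); auto. apply HV.
  - intros [HxU HxV]. exists z, (- z)%H. split; [| split].
    + exists (x + v)%H. split; [| hvec]. apply normal_cone_of_orth; auto using orth_add.
    + replace (- - z - v)%H with w by (rewrite Ez; hvec).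
      apply normal_cone_of_orth; auto using orth_opp.
    + symmetry. apply hadd_opp.
Qed.

Lemma Fix_DR_translate_eq : set_eq (Fix (fun x => v + DR U V x)%H)
  (msum (inter U (translate v V)) (inter (orth (par U)) (orth (par V)))).
Proof.
  intro x. unfold Fix.
  assert (Hfix : (v + DR U V x)%H = x <-> DR_displacement U V x = v).
  { unfold DR_displacement. split; intro E; [rewrite <- E at 1 | rewrite <- E]; hvec. }
  rewrite Hfix. split.
  - intro Hx.
    set (p := proj U x). set (q := proj V p). set (k := (x - p)%H).
    assert (EV : proj V x = (q + proj_lin V k)%H).
    { unfold q, k. rewrite <- proj_add; auto. f_equal. hvec. }
    assert (Ev : v = (p - q + proj_lin V k)%H).
    { rewrite <- Hx, DR_displacement_formula, EV; auto. fold p q. hvec. }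
    (* [v] and [p - q] are orthogonal to [par V], so [v = (p - q) + proj_lin V k]
       forces [proj_lin V k = 0] *)
    assert (Hk : proj_lin V k = 0%H).
    { apply (orth_decomp_unique V _ (p - q)%H _ v);
        auto using proj_lin_par, proj_orth, par_0. rewrite Ev. hvec. }
    exists p, k. split; [split | split; [split |]].
    + apply proj_in; auto.
    + exists q. split. apply proj_in; auto. rewrite Ev, Hk. hvec.
    + apply proj_orth; auto.
    + replace k with (k - proj_lin V k)%H by (rewrite Hk; hvec). apply proj_lin_orth; auto.
    + unfold k. hvec.
  - intros (z & k & [Hz [w [Hw ->]]] & [HkU HkV] & ->).
    rewrite DR_displacement_add, (proj_lin_eq0 U k), (proj_lin_eq0 V k),
      (proj_lin_eq0 V 0%H), DR_displacement_formula, (proj_id U); auto using orth_0.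
    rewrite (hadd_comm _ v w), (proj_add_orth V), (proj_id V); auto. hvec.
Qed.

End ShiftedProblem.

Lemma msum_set_eq {X : Hilbert} (A A' B B' : @set X) :
  set_eq A A' -> set_eq B B' -> set_eq (msum A B) (msum A' B').
Proof.
  intros HA HB x. split; intros (a & b & Ha & Hb & ->); exists a, b;
    repeat split; first [apply HA | apply HB]; auto.
Qed.

Lemma set_eq_trans {X : Hilbert} (A B C : @set X) :
  set_eq A B -> set_eq B C -> set_eq A C.
Proof. intros HAB HBC x. rewrite (HAB x). apply HBC. Qed.

Lemma set_eq_sym {X : Hilbert} (A B : @set X) : set_eq A B -> set_eq B A.
Proof. intros H x. symmetry. apply H. Qed.

Local Open Scope hilbert_scope.

Theorem proposition4p3 (X : Hilbert) (U V : @set X) :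
  closed_affine_subspace U -> closed_affine_subspace V ->
  let T := DR U V in
  let v := proj (closure (ran (fun x => x - T x))) 0 in
  ran (fun x => x - T x) v ->
  (* (i) *)
  (affine_map T /\
   fun_eq T (fun x => x - proj U x - proj V x + 2%R *: proj V (proj U x))) /\
  (* (ii) *)
  inter (orth (par U)) (orth (par V)) v /\
  (* (iii) *)
  (forall (x : X) (a : R), proj U x = proj U (x + a *: v)) /\
  (* (iv) *)
  (forall (x : X) (a : R), proj V x = proj V (x + a *: v)) /\
  (* (v) *)
  (fun_eq (fun x => T (x + v)) (fun x => v + T x) /\
   fun_eq (fun x => v + T x)
          (DR_op (normal_cone U) (op_shift_arg (normal_cone V) v)) /\
   fun_eq (DR_op (normal_cone U) (op_shift_arg (normal_cone V) v))
          (DR U (translate v V))) /\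
  (* (vi) *)
  set_eq (Zv U V v) (inter U (translate v V)) /\
  (* (vii) *)
  set_eq (Kv U V v) (inter (orth (par U)) (orth (par V))) /\
  (* (viii) *)
  (set_eq (Fix (fun x => T (x + v))) (Fix (fun x => v + T x)) /\
   set_eq (Fix (fun x => v + T x)) (msum (Zv U V v) (Kv U V v)) /\
   set_eq (msum (Zv U V v) (Kv U V v))
          (msum (inter U (translate v V)) (inter (orth (par U)) (orth (par V))))).
Proof.
  intros HU HV T v [x0 Hx0].
  assert (Hv : DR_displacement U V x0 = v) by exact Hx0.
  destruct (min_DR_displacement_orth U V HU HV x0) as [HvU HvV]; [exact Hx0 |].
  rewrite Hv in HvU, HvV.
  assert (Hcap : exists z, U z /\ translate v V z).
  { exists (proj U x0). split; [apply proj_in; auto |].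
    exists (proj V (2 *: proj U x0 - x0)). split; [apply proj_in; auto |].
    rewrite <- Hv. unfold DR_displacement, DR. hvec. }
  pose proof (Zv_eq U V v HvU) as HZ.
  pose proof (Kv_eq U V v HU HV HvU Hcap) as HK.
  refine (conj (conj _ _) (conj (conj HvU HvV) (conj _ (conj _
           (conj (conj _ (conj _ _)) (conj HZ (conj HK (conj _ (conj _ _))))))))).
  - apply DR_affine; auto.
  - intro x. apply DR_formula; auto.
  - intros x a. symmetry. apply proj_add_orth; auto using orth_scal.
  - intros x a. symmetry. apply proj_add_orth; auto using orth_scal.
  - intro x. apply DR_add_orth; auto.
  - apply DR_op_shift_eq; auto.
  - apply DR_op_shift_translate; auto.
  - intro x. unfold Fix, T. rewrite DR_add_orth; auto. reflexivity.
  - apply (set_eq_trans _ _ _ (Fix_DR_translate_eq U V v HU HV HvV)).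
    apply set_eq_sym, msum_set_eq; auto.
  - apply msum_set_eq; auto.
Qed.
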